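(* Let $s\ge3$ be an integer, $\psi_s(z):=z^{s-1}(z+s)-(s-1)^{s-1}$, and let $\alpha$ be a nontrivial root of $\psi_s$ of degree $d$ as an algebraic number, with conjugates $\beta_1,\dots,\beta_d$ (including $\alpha$). Put $M:=\prod_{j=1}^d(s+\beta_j)$ and $N:=\prod_{j=1}^d\beta_j$ (both rational integers). Then there is an integer $n$ with $|n|\ge2$, $n\mid(s-1)$, $M=n^{s-1}$ and $nN=(s-1)^d$.
   Context: When $s$ is odd, $z=1-s$ is a double root of $\psi_s$, called trivial; all other roots are nontrivial. When $s$ is even all roots are nontrivial. *)

From mathcomp Require Import all_boot all_order all_algebra all_field.
Set Implicit Arguments. Unset Strict Implicit. Unset Printing Implicit Defensive.
Import Order.TTheory GRing.Theory Num.Theory.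
Local Open Scope ring_scope.

Definition psi (s : nat) : {poly algC} :=
  'X ^+ (s.-1) * ('X + (s%:R)%:P) - ((s.-1 ^ s.-1)%N%:R)%:P.

Definition nontrivial_root (s : nat) (a : algC) : bool :=
  root (psi s) a && ~~ (odd s && (a == 1 - s%:R)).

From mathcomp Require Import all_boot all_order all_algebra all_field.
From mathcomp Require Import ring zify.
Import Order.TTheory GRing.Theory Num.Theory.
Set Implicit Arguments.
Unset Strict Implicit.
Local Open Scope ring_scope.

(* Write s = m + 1.  For a root b of psi_s the dual root t = m / b satisfies
   t ^ m = s + b and t ^ (m + 1) = s t + m, so t is an algebraic integer.  For
   the conjugates b_j of alpha, n = prod_j m / b_j = m ^ d / N is rational, hence
   a rational integer; then M = prod_j t_j ^ m = n ^ m and n N = m ^ d, and n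
   divides m because the product of m / b over all roots of psi_s is +-m while
   the product over the remaining roots is an integer too.
   If |n| = 1, the integer prod_j (1 + t_j) has absolute value < 1 by the
   estimate |1 + t| <= |t| ^ m (strict when |t| >= 1) for roots of the
   trinomial, so it vanishes: some conjugate equals -m, hence alpha = -m = 1 - s,
   which is a root of psi_s only for s odd, i.e. alpha is the trivial root. *)

Lemma leq_expSn_expnS k : (3 <= k)%N -> (k.+1 ^ k <= k ^ k.+1)%N.
Proof.
elim: k => // k IH; rewrite leq_eqVlt => /orP [/eqP [<-] // | /IH {}IH].
have : ((k * k.+2) ^ k.+1 <= (k.+1 * k.+1) ^ k.+1)%N by rewrite leq_exp2r //; nia.
rewrite !expnMn => le_kS.
have : (k.+1 ^ k * k.+2 ^ k.+1 <= k.+1 ^ k * k.+1 ^ k.+2)%N.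
  apply: leq_trans (leq_mul IH (leqnn _)) _.
  by apply: (leq_trans le_kS); rewrite -!expnD !addSn !addnS.
by rewrite leq_pmul2l ?expn_gt0.
Qed.

Section SeqProducts.

Variable R : comPzRingType.

Lemma prodrN_seq (I : Type) (r : seq I) (F : I -> R) :
  \prod_(i <- r) - F i = (-1) ^+ size r * \prod_(i <- r) F i.
Proof.
elim: r => [|i r IH]; first by rewrite !big_nil mulr1.
by rewrite !big_cons IH exprS; ring.
Qed.

Lemma prodr_const_seq (I : Type) (r : seq I) (c : R) :
  \prod_(i <- r) c = c ^+ size r.
Proof. by elim: r => [|i r IH]; rewrite ?big_nil // big_cons IH exprS. Qed.

End SeqProducts.

Lemma ltr_prod_le_lt (R : numDomainType) (I : eqType) (r : seq I) (E1 E2 : I -> R) :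
    (forall i, i \in r -> 0 <= E1 i <= E2 i) -> (forall i, i \in r -> 0 < E2 i) ->
    (exists2 i, i \in r & E1 i < E2 i) ->
  \prod_(i <- r) E1 i < \prod_(i <- r) E2 i.
Proof.
elim: r => [|j r IH] le12 gt2 [i]; first by rewrite in_nil.
have le12r i' : i' \in r -> 0 <= E1 i' <= E2 i' by move=> ri'; rewrite le12 // inE ri' orbT.
have gt2r i' : i' \in r -> 0 < E2 i' by move=> ri'; rewrite gt2 // inE ri' orbT.
have /andP [ge0_1j le12j] := le12 j (mem_head _ _).
have ge0_1r : 0 <= \prod_(i' <- r) E1 i'.
  by rewrite big_seq prodr_ge0 // => i' /le12r /andP [].
have gt0_2r : 0 < \prod_(i' <- r) E2 i' by rewrite big_seq prodr_gt0.
have le12_r : \prod_(i' <- r) E1 i' <= \prod_(i' <- r) E2 i'.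
  by rewrite !big_seq; apply: ler_prod => i' /le12r.
rewrite !big_cons inE => /orP [/eqP -> lt12j | ri lt12i].
  apply: le_lt_trans (ler_wpM2l ge0_1j le12_r) _.
  by rewrite ltr_pM2r.
apply: le_lt_trans (ler_wpM2r ge0_1r le12j) _.
by rewrite ltr_pM2l ?gt2 ?mem_head ?IH //; exists i.
Qed.

(* The case m = 3 of [norm_trinomial_addr1_le_small] below, where the
   inequality (m - 1) ^ m >= m ^ (m - 1) used for m >= 4 fails. *)
Lemma quartic_small_norms_contra (R : numDomainType) (r x : R) :
  0 <= r -> r ^+ 3 < x -> 3 * x < 1 -> 4 * x - 1 <= r ^+ 4 -> 1 - x <= r -> False.
Proof.
move=> ge0_r lt_r3_x lt_3x_1 le_4x_r4 le_1x_r.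
have cube_le (a b : R) : 0 <= a -> a <= b -> a ^+ 3 <= b ^+ 3.
  by move=> ge0_a le_ab; rewrite ler_pXn2r ?nnegrE // (le_trans ge0_a).
have lt_10r_7 : 10 * r < 7.
  rewrite real_ltNge ?realE ?mulr_ge0 ?ler0n //; apply/negP => /(cube_le _ _ (ler0n _ 7)).
  rewrite exprMn => le_73_r3.
  have : 3 * 7 ^+ 3 < 3 * 10 ^+ 3 * x :> R.
    by rewrite -mulrA ltr_pM2l ?ltr0n // (le_lt_trans le_73_r3) // ltr_pM2l ?exprn_gt0 ?ltr0n.
  rewrite mulrAC => /lt_le_trans/(_ (ler_wpM2r (exprn_ge0 _ (ler0n _ _)) (ltW lt_3x_1))).
  by rewrite mul1r -!natrX -natrM ltr_nat.
have le_33x_10 : 33 * x <= 10.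
  have : 10 * (4 * x - 1) <= 7 * x.
    apply: le_trans (ler_wpM2l (ler0n _ 10) le_4x_r4) _.
    rewrite exprS mulrA; apply: le_trans (ler_wpM2r (exprn_ge0 _ ge0_r) (ltW lt_10r_7)) _.
    by rewrite ler_wpM2l ?ler0n ?ltW.
  rewrite -subr_ge0 => ge0_diff; rewrite -subr_ge0.
  by have -> : 10 - 33 * x = 7 * x - 10 * (4 * x - 1) by ring.
have le_23_33r : 23 <= 33 * r.
  apply: le_trans (ler_wpM2l (ler0n _ 33) le_1x_r); rewrite mulrBr mulr1.
  have -> : 33 - 33 * x = 23 + (10 - 33 * x) :> R by ring.
  by rewrite lerDl subr_ge0.
have := cube_le _ _ (ler0n _ 23) le_23_33r; rewrite exprMn => le_233_r3.
have : 23 ^+ 3 < 33 ^+ 2 * (33 * x) :> R.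
  by apply: le_lt_trans le_233_r3 _; rewrite exprSr -mulrA !ltr_pM2l ?exprn_gt0 ?ltr0n.
move=> /lt_le_trans/(_ (ler_wpM2l (exprn_ge0 _ (ler0n _ _)) le_33x_10)).
by rewrite -!natrX -natrM ltr_nat.
Qed.

Section TrinomialRoots.

Variables (C : numDomainType) (m : nat) (t : C).
Hypothesis trinomial_t : t ^+ m.+1 = m.+1%:R * t + m%:R.

Lemma norm_trinomial_lower : m.+1%:R * `|1 + t| - 1 <= `|t| ^+ m.+1.
Proof.
rewrite -normrX trinomial_t.
have -> : m.+1%:R * t + m%:R = m.+1%:R * (1 + t) - 1 by rewrite -natr1; ring.
by have := lerB_dist (m.+1%:R * (1 + t)) 1; rewrite normrM normr_nat normr1.
Qed.

Lemma norm_trinomial_upper : `|t| ^+ m.+1 <= m.+1%:R * `|t| + m%:R.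
Proof.
rewrite -normrX trinomial_t.
by apply: le_trans (ler_normD _ _) _; rewrite normrM !normr_nat.
Qed.

Hypothesis m_ge2 : (2 <= m)%N.

Lemma norm_trinomial_le : `|t| <= m%:R.
Proof.
rewrite real_leNgt ?realE ?normr_ge0 ?ler0n //; apply/negP => lt_m_t.
have t_gt0 : 0 < `|t| by apply: le_lt_trans lt_m_t; rewrite ler0n.
have : `|t| ^+ m.+1 < `|t| * m.+2%:R.
  apply: le_lt_trans norm_trinomial_upper _.
  by rewrite -(natr1 m.+1) mulrDr mulr1 mulrC ltrD2l.
rewrite exprS ltr_pM2l // => lt_tm_mS.
have lt_mm_tm : m%:R ^+ m < `|t| ^+ m by rewrite ltr_pXn2r ?nnegrE ?ler0n //; lia.
have lt_mm_mS : (m ^ m < m.+2)%N by rewrite -(ltr_nat C) natrX (lt_trans lt_mm_tm).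
have le_m2_mm : (m ^ 2 <= m ^ m)%N by rewrite leq_pexp2l //; lia.
by have := leq_ltn_trans le_m2_mm lt_mm_mS; rewrite expnS expn1; nia.
Qed.

Lemma norm_trinomial_addr1_lt : 1 <= `|t| -> `|1 + t| < `|t| ^+ m.
Proof.
move=> ge1_t; set r := `|t|; set x := `|1 + t|.
have ge0_r : 0 <= r by rewrite normr_ge0.
rewrite real_ltNge ?realE ?normr_ge0 ?exprn_ge0 //; apply/negP => le_rm_x.
have : m.+1%:R * r ^+ m <= r * r ^+ m + 1.
  apply: le_trans (ler_wpM2l (ler0n _ _) le_rm_x) _.
  by rewrite -exprS -lerBlDr norm_trinomial_lower.
rewrite -lerBlDl -mulrBl => le_rm_1.
have le_r_m : r <= m%:R := norm_trinomial_le.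
have ge0_mSr : 0 <= m.+1%:R - r by rewrite subr_ge0 (le_trans le_r_m) ?ler_nat.
have : (m.+1%:R - r) * r <= (m.+1%:R - r) * r ^+ m.
  by rewrite ler_wpM2l // ler_eXnr //; lia.
have -> : (m.+1%:R - r) * r = m%:R + (r - 1) * (m%:R - r) by rewrite -natr1; ring.
move=> le_m_rm; have : m%:R <= 1 :> C.
  apply: le_trans (le_trans le_m_rm le_rm_1).
  by rewrite lerDl mulr_ge0 ?subr_ge0.
by rewrite lern1; lia.
Qed.

Lemma norm_trinomial_addr1_le_small : (3 <= m)%N -> `|t| < 1 -> `|1 + t| <= `|t| ^+ m.
Proof.
move=> m_ge3 lt1_t; set r := `|t|; set x := `|1 + t|.
have ge0_r : 0 <= r by rewrite normr_ge0.
have lower := norm_trinomial_lower; rewrite -/r -/x in lower.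
rewrite real_leNgt ?realE ?normr_ge0 ?exprn_ge0 //; apply/negP => lt_rm_x.
have lt_mx_1 : m%:R * x < 1.
  have le_rmS_rm : r ^+ m.+1 <= r ^+ m by rewrite exprS ler_piMl ?exprn_ge0 // ltW.
  have := le_lt_trans (le_trans lower le_rmS_rm) lt_rm_x.
  by rewrite -natr1 mulrDl mul1r ltrBlDr [x + 1]addrC ltrD2r.
have le_1x_r : 1 - x <= r.
  by have := lerB_dist 1 (1 + t); rewrite normr1 opprD addrA subrr add0r normrN.
have [m3 | m_ge4] : m = 3 \/ (4 <= m)%N by lia.
  subst m; apply: (@quartic_small_norms_contra C r x ge0_r lt_rm_x lt_mx_1 lower le_1x_r).
have le_mpred_mr : m.-1%:R <= m%:R * r.
  rewrite -subn1 natrB; last lia.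
  apply: le_trans (ler_wpM2l (ler0n C m) le_1x_r); rewrite mulrBr mulr1 lerB //.
  exact: ltW.
have le_pow : m%:R ^+ m.-1 <= m%:R ^+ m.-1 * (m%:R * r ^+ m) :> C.
  have : (m ^ m.-1 <= m.-1 ^ m)%N.
    by have := @leq_expSn_expnS m.-1; rewrite prednK; [apply; lia | lia].
  rewrite -(ler_nat C) !natrX => /le_trans; apply.
  rewrite mulrA -exprSr prednK; last lia.
  by rewrite -exprMn ler_pXn2r ?nnegrE ?mulr_ge0 ?ler0n //; lia.
have : 1 <= m%:R * r ^+ m.
  by rewrite -(ler_pM2l (exprn_gt0 m.-1 (_ : 0 < m%:R))) ?mulr1 // ltr0n; lia.
move/le_lt_trans/(_ (le_lt_trans (ler_wpM2l (ler0n _ _) (ltW lt_rm_x)) lt_mx_1)).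
by rewrite ltxx.
Qed.

Lemma norm_trinomial_addr1_le : `|1 + t| <= `|t| ^+ m.
Proof.
have [ge1_t | lt1_t] := boolP (1 <= `|t|).
  exact/ltW/norm_trinomial_addr1_lt.
have {}lt1_t : `|t| < 1 by rewrite real_ltNge ?realE ?normr_ge0 ?ler01.
have [m2 | m_ge3] : m = 2 \/ (3 <= m)%N by lia.
  have : (t - 2) * (t + 1) ^+ 2 = 0.
    have -> : (t - 2) * (t + 1) ^+ 2 = t ^+ 3 - (3%:R * t + 2%:R) by ring.
    by move: trinomial_t; rewrite m2 => ->; rewrite subrr.
  rewrite m2 => /eqP; rewrite mulf_eq0 sqrf_eq0 subr_eq0 addr_eq0.
  case/orP => /eqP ->; last by rewrite subrr normr0 exprn_ge0.
  by rewrite addrC natr1 !normr_nat -natrX ler_nat.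
exact: norm_trinomial_addr1_le_small.
Qed.

End TrinomialRoots.

Lemma monic_dvdp_cofactor (p q : {poly algC}) :
  p \is monic -> q \is monic -> p %| q ->
  exists rs, q = \prod_(r <- rs) ('X - r%:P) * p.
Proof.
move=> monic_p monic_q dvd_pq; have [rs Drs] := closed_field_poly_normal (q %/ p).
exists rs; rewrite -[in LHS](divpK dvd_pq) [in LHS]Drs.
suff -> : lead_coef (q %/ p) = 1 by rewrite scale1r.
have := congr1 lead_coef (divpK dvd_pq).
by rewrite lead_coefM (monicP monic_p) (monicP monic_q) mulr1.
Qed.

Lemma minCpoly_root_Crat (a c : algC) : c \in Crat -> root (minCpoly a) c -> a = c.
Proof.
have [p [Dp monic_p] dvd_p] := minCpolyP a.
case/CratP => c' ->; rewrite Dp fmorph_root => /factor_theorem [g Dg].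
have : root (map_poly ratr p) a by rewrite -Dp root_minCpoly.
rewrite Dg rmorphM /= rootM => /orP [g_a | ].
  have g0 : g != 0.
    by apply: contraTneq (monic_neq0 monic_p) => g0; rewrite Dg g0 mul0r eqxx.
  have := dvd_p g; rewrite g_a => /esym/(dvdp_leq g0).
  by rewrite Dg size_Mmonic ?monicXsubC // size_XsubC addn2 ltnn.
by rewrite rmorphB /= map_polyX map_polyC /= root_XsubC => /eqP.
Qed.

Lemma prod_addr_conj_Crat (a c : algC) (bs : seq algC) :
  minCpoly a = \prod_(b <- bs) ('X - b%:P) -> c \in Crat ->
  \prod_(b <- bs) (c + b) \in Crat.
Proof.
have [p [Dp _] _] := minCpolyP a.
move=> Dbs Crat_c; have : (minCpoly a).[- c] \in Crat.
  by rewrite rpred_horner ?rpredN //; apply/polyOverP => i; rewrite Dp coef_map Crat_rat.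
rewrite Dbs horner_prod; under eq_bigr do rewrite hornerXsubC -opprD.
rewrite prodrN_seq -[X in _ -> X \in _](signrMK (size bs)).
by apply: rpredM; rewrite rpredX ?rpredN1.
Qed.

Section PsiRoots.

Variable m : nat.

Lemma psi_hornerE (b : algC) :
  (psi m.+1).[b] = b ^+ m * (b + m.+1%:R) - m%:R ^+ m.
Proof. by rewrite /psi /= !hornerE natrX. Qed.

Lemma root_psiE (b : algC) :
  root (psi m.+1) b = (b ^+ m * (b + m.+1%:R) == m%:R ^+ m).
Proof. by rewrite /root psi_hornerE subr_eq0. Qed.

Let size_psi_lead : size ('X ^+ m * ('X + (m.+1%:R)%:P) : {poly algC}) = m.+2.
Proof.
by rewrite size_monicM ?monicXn ?size_polyXn ?size_XaddC ?addn2 // monic_neq0 ?monicXaddC.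
Qed.

Let size_psi_const : (size (- ((m ^ m)%N%:R)%:P : {poly algC}) < m.+2)%N.
Proof. by rewrite size_polyN; exact: leq_ltn_trans (size_polyC_leq1 _) _. Qed.

Lemma size_psi : size (psi m.+1) = m.+2.
Proof. by rewrite /psi /= size_polyDl size_psi_lead. Qed.

Lemma psi_monic : psi m.+1 \is monic.
Proof.
rewrite monicE /psi /= lead_coefDl ?size_psi_lead //.
by rewrite -monicE monicMl ?monicXn ?monicXaddC.
Qed.

Lemma minCpoly_dvd_psi (a : algC) : root (psi m.+1) a -> minCpoly a %| psi m.+1.
Proof.
have [p [Dp _] dvd_p] := minCpolyP a.
have -> : psi m.+1 = map_poly ratr
    ('X ^+ m * ('X + (m.+1%:R)%:P) - ((m ^ m)%N%:R)%:P : {poly rat}).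
  rewrite /psi /= rmorphB rmorphM rmorphD /= map_polyXn map_polyX !map_polyC /=.
  by rewrite !rmorph_nat natrX.
by rewrite Dp dvdp_map -dvd_p.
Qed.

Hypothesis m_gt0 : (0 < m)%N.

Lemma psi_root_neq0 (b : algC) : root (psi m.+1) b -> b != 0.
Proof.
rewrite root_psiE; apply: contraTneq => ->.
by rewrite expr0n eqn0Ngt m_gt0 mul0r eq_sym expf_eq0 pnatr_eq0 eqn0Ngt m_gt0.
Qed.

Lemma psi_root_dual_expr (b : algC) : root (psi m.+1) b -> (m%:R / b) ^+ m = m.+1%:R + b.
Proof.
move=> psi_b; have b_neq0 := psi_root_neq0 psi_b; move: psi_b.
rewrite root_psiE expr_div_n => /eqP <-.
by rewrite mulrC mulKf ?expf_neq0 // addrC.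
Qed.

Lemma psi_root_dual_trinomial (b : algC) : root (psi m.+1) b ->
  (m%:R / b) ^+ m.+1 = m.+1%:R * (m%:R / b) + m%:R.
Proof.
move=> psi_b; rewrite exprS psi_root_dual_expr // mulrDr mulrC.
by rewrite [m%:R / b * b]divfK ?psi_root_neq0.
Qed.

Lemma trinomial_Aint (t : algC) : t ^+ m.+1 = m.+1%:R * t + m%:R -> t \in Aint.
Proof.
move=> trinomial_t.
apply: (@root_monic_Aint ('X ^+ m.+1 - (m.+1%:R *: 'X + (m%:R)%:P))).
- by rewrite /root !hornerE trinomial_t subrr.
- rewrite monicE lead_coefDl ?lead_coefXn // size_polyN size_polyXn ltnS.
  apply: leq_trans (size_polyD _ _) _; rewrite geq_max size_polyC.
  by rewrite (leq_trans (size_scale_leq _ _)) ?size_polyX //; case: (_ != 0).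
- apply/polyOverP => i; rewrite coefB coefD coefZ coefX coefC coefXn.
  by rewrite rpredB ?rpredD ?rpredM ?rpred_nat //; case: eqP; rewrite ?rpred_nat ?rpred0.
Qed.

Lemma psi_root_opp_nat : root (psi m.+1) (- m%:R) -> ~~ odd m.
Proof.
rewrite root_psiE -natr1 addrA addNr add0r mulr1 exprNn -signr_odd.
case: (odd m) => //; rewrite expr1 mulN1r eq_sym -addr_eq0 -mulr2n mulrn_eq0 /=.
by rewrite expf_eq0 pnatr_eq0 eqn0Ngt m_gt0 andbF.
Qed.

Lemma prod_dual_psi_roots (rs : seq algC) :
  psi m.+1 = \prod_(r <- rs) ('X - r%:P) -> \prod_(r <- rs) (m%:R / r) = (-1) ^+ m * m%:R.
Proof.
move=> Drs; have size_rs : size rs = m.+1.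
  have := congr1 (fun p : {poly algC} => size p) Drs.
  by rewrite size_psi size_prod_XsubC => -[].
have : (psi m.+1).[0] = (-1) ^+ m.+1 * \prod_(r <- rs) r.
  rewrite Drs horner_prod; under eq_bigr do rewrite hornerXsubC sub0r.
  by rewrite prodrN_seq size_rs.
rewrite psi_hornerE expr0n eqn0Ngt m_gt0 mul0r sub0r => Dprod.
have mm_neq0 : m%:R ^+ m != 0 :> algC by rewrite expf_eq0 pnatr_eq0 eqn0Ngt m_gt0 andbF.
rewrite prodf_div prodr_const_seq size_rs -[X in _ / X](signrMK m.+1) -Dprod.
by rewrite !exprS mulN1r mulrNN invfM invr_sign; field.
Qed.

End PsiRoots.

Section Conjugates.

Variables (m : nat) (alpha : algC) (betas qs : seq algC).
Hypothesis m_gt0 : (0 < m)%N.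
Hypothesis minCpolyE : minCpoly alpha = \prod_(b <- betas) ('X - b%:P).
Hypothesis psiE : psi m.+1 = \prod_(q <- qs) ('X - q%:P) * minCpoly alpha.

Lemma conj_psi_root b : b \in betas -> root (psi m.+1) b.
Proof. by move=> betas_b; rewrite psiE minCpolyE rootM !root_prod_XsubC betas_b orbT. Qed.

Lemma cofactor_psi_root q : q \in qs -> root (psi m.+1) q.
Proof. by move=> qs_q; rewrite psiE rootM root_prod_XsubC qs_q. Qed.

Lemma prod_conj_Crat : \prod_(b <- betas) b \in Crat.
Proof.
by have := prod_addr_conj_Crat minCpolyE (rpred0 _); under eq_bigr do rewrite add0r.
Qed.

Lemma conj_neq0 b : b \in betas -> b != 0.
Proof. by move/conj_psi_root; apply: psi_root_neq0. Qed.

Lemma prod_dual_conj_mul :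
  \prod_(b <- betas) (m%:R / b) * \prod_(b <- betas) b = m%:R ^+ size betas.
Proof.
rewrite -big_split /= -prodr_const_seq big_seq [RHS]big_seq.
by apply: eq_bigr => b /conj_neq0 b_neq0; rewrite divfK.
Qed.

Lemma prod_dual_conj_Crat : \prod_(b <- betas) (m%:R / b) \in Crat.
Proof. by rewrite prodf_div prodr_const_seq rpred_div ?rpredX ?rpred_nat ?prod_conj_Crat. Qed.

Lemma prod_dual_conj_Cint : \prod_(b <- betas) (m%:R / b) \is a Num.int.
Proof.
apply: Cint_rat_Aint; first exact: prod_dual_conj_Crat.
rewrite big_seq rpred_prod // => b /conj_psi_root psi_b.
exact/trinomial_Aint/psi_root_dual_trinomial.
Qed.

Lemma prod_dual_conj_cofactor :
  \prod_(b <- betas) (m%:R / b) * \prod_(q <- qs) (m%:R / q) = (-1) ^+ m * m%:R.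
Proof.
rewrite mulrC -big_cat prod_dual_psi_roots // big_cat /=.
by rewrite psiE minCpolyE.
Qed.

Lemma prod_dual_conj_neq0 : \prod_(b <- betas) (m%:R / b) != 0.
Proof.
apply/eqP => prod0; have := prod_dual_conj_cofactor; rewrite prod0 mul0r => /esym/eqP.
by rewrite mulf_eq0 signr_eq0 pnatr_eq0 eqn0Ngt m_gt0.
Qed.

Lemma prod_dual_cofactor_Cint : \prod_(q <- qs) (m%:R / q) \is a Num.int.
Proof.
apply: Cint_rat_Aint.
  rewrite -(mulKf prod_dual_conj_neq0 (\prod_(q <- qs) _)) prod_dual_conj_cofactor.
  by rewrite !rpredM ?rpredV ?rpredX ?rpredN1 ?rpred_nat ?prod_dual_conj_Crat.
rewrite big_seq rpred_prod // => q /cofactor_psi_root psi_q.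
exact/trinomial_Aint/psi_root_dual_trinomial.
Qed.

Lemma prod_addr_conj : \prod_(b <- betas) (m.+1%:R + b) = (\prod_(b <- betas) (m%:R / b)) ^+ m.
Proof.
rewrite -prodrXl big_seq [RHS]big_seq.
by apply: eq_bigr => b /conj_psi_root /psi_root_dual_expr ->.
Qed.

Lemma prod_addr1_dual_conj_Cint : \prod_(b <- betas) (1 + m%:R / b) \is a Num.int.
Proof.
apply: Cint_rat_Aint.
  have -> : \prod_(b <- betas) (1 + m%:R / b) =
            \prod_(b <- betas) (m%:R + b) / \prod_(b <- betas) b.
    rewrite -prodf_div big_seq [RHS]big_seq; apply: eq_bigr => b /conj_neq0 b_neq0.
    by field.
  by rewrite rpred_div ?prod_conj_Crat ?(prod_addr_conj_Crat minCpolyE) ?rpred_nat.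
rewrite big_seq rpred_prod // => b /conj_psi_root psi_b.
by rewrite rpredD ?rpred1 //; exact/trinomial_Aint/psi_root_dual_trinomial.
Qed.

Hypothesis m_ge2 : (2 <= m)%N.

Lemma norm_prod_addr1_dual_conj_lt :
  `|\prod_(b <- betas) (m%:R / b)| = 1 -> `|\prod_(b <- betas) (1 + m%:R / b)| < 1.
Proof.
rewrite normr_prod => norm_prod1.
have [b0 betas_b0] : exists b, b \in betas.
  case: betas minCpolyE => [|b bs] Dbetas; last by exists b; rewrite mem_head.
  by have := size_minCpoly alpha; rewrite Dbetas big_nil size_poly1.
have trinomial_b b : b \in betas -> (m%:R / b) ^+ m.+1 = m.+1%:R * (m%:R / b) + m%:R.
  by move/conj_psi_root; apply: psi_root_dual_trinomial.
have norm_gt0 b : b \in betas -> 0 < `|m%:R / b|.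
  by move/conj_neq0 => b_neq0; rewrite normr_gt0 mulf_neq0 ?invr_eq0 ?pnatr_eq0 -?lt0n.
suff : \prod_(b <- betas) `|1 + m%:R / b| < \prod_(b <- betas) `|m%:R / b| ^+ m.
  by rewrite normr_prod prodrXl norm_prod1 expr1n.
apply: ltr_prod_le_lt => [b /trinomial_b trin_b | b /norm_gt0 ? |].
- by rewrite normr_ge0 norm_trinomial_addr1_le.
- exact: exprn_gt0.
have [[b betas_b ge1_b] | all_lt1] := altP (@hasP _ (fun b => 1 <= `|m%:R / b|) betas).
  by exists b => //; apply: norm_trinomial_addr1_lt (trinomial_b b betas_b) m_ge2 ge1_b.
have lt1 b : b \in betas -> `|m%:R / b| < 1.
  move=> betas_b; have := hasPn all_lt1 b betas_b.
  by rewrite /= -real_ltNge ?realE ?normr_ge0 ?ler01.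
have : \prod_(b <- betas) `|m%:R / b| < \prod_(b <- betas) 1.
  apply: ltr_prod_le_lt => [b /lt1 /ltW | b _ |]; rewrite ?ltr01 ?normr_ge0 //.
  by exists b0; rewrite ?lt1.
by rewrite big1_eq norm_prod1 ltxx.
Qed.

Lemma norm_prod_dual_conj_neq1 :
  nontrivial_root m.+1 alpha -> `|\prod_(b <- betas) (m%:R / b)| != 1.
Proof.
case/andP=> psi_alpha not_trivial; apply/eqP => /norm_prod_addr1_dual_conj_lt lt1.
have /eqP : \prod_(b <- betas) (1 + m%:R / b) = 0.
  apply/eqP; apply: contraLR lt1 => prod_neq0.
  by rewrite -real_leNgt ?realE ?normr_ge0 ?ler01 // norm_intr_ge1 ?prod_addr1_dual_conj_Cint.
rewrite prodf_seq_eq0 => /hasP [b betas_b /= /eqP dual_b].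
have b_eq : b = - m%:R.
  have : (1 + m%:R / b) * b = 0 by rewrite dual_b mul0r.
  by rewrite mulrDl mul1r divfK ?conj_neq0 // => /eqP; rewrite addr_eq0 => /eqP.
have alpha_eq : alpha = - m%:R.
  by apply: minCpoly_root_Crat; rewrite ?rpredN ?rpred_nat // minCpolyE root_prod_XsubC -b_eq.
move: not_trivial; rewrite alpha_eq in psi_alpha *; rewrite /= psi_root_opp_nat //=.
by rewrite -natr1 opprD addrCA subrr addr0 eqxx.
Qed.

End Conjugates.

Unset Implicit Arguments.

Theorem mainTheorem19 (s : nat) (alpha : algC) (betas : seq algC) :
  (3 <= s)%N ->
  nontrivial_root s alpha ->
  minCpoly alpha = \prod_(b <- betas) ('X - b%:P) ->
  let d := size betas in
  let M := \prod_(b <- betas) (s%:R + b) in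
  let N := \prod_(b <- betas) b in
  exists n : int,
    [/\ (2 <= `|n|)%N, (n %| (s.-1)%:Z)%Z,
        M = (n%:~R) ^+ s.-1 & n%:~R * N = (s.-1)%:R ^+ d].
Proof.
case: s => [|m] // m_ge2 nontrivial_alpha minCpolyE d M N /=.
have m_gt0 : (0 < m)%N := ltnW m_ge2.
have psi_alpha : root (psi m.+1) alpha by case/andP: nontrivial_alpha.
have [qs psiE] := monic_dvdp_cofactor (minCpoly_monic alpha) (psi_monic m)
  (minCpoly_dvd_psi psi_alpha).
have [n Dn] := intrP (prod_dual_conj_Cint m_gt0 minCpolyE psiE).
have [w Dw] := intrP (prod_dual_cofactor_Cint m_gt0 minCpolyE psiE).
exists n; split.
- have : n != 0.
    by rewrite -(inj_eq (@intr_inj algC)) -Dn (prod_dual_conj_neq0 m_gt0 minCpolyE psiE).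
  have : `|n| != 1.
    rewrite -(inj_eq (@intr_inj algC)) intr_norm -Dn.
    exact: (norm_prod_dual_conj_neq1 m_gt0 minCpolyE psiE m_ge2).
  lia.
- apply/dvdzP; exists ((-1) ^+ m * w); apply: (@intr_inj algC).
  rewrite !rmorphM /= rmorph_sign -Dw mulrAC -Dn -mulrA.
  by rewrite (prod_dual_conj_cofactor m_gt0 minCpolyE psiE) signrMK.
- by rewrite /M (prod_addr_conj m_gt0 minCpolyE psiE) -Dn.
- by rewrite -Dn (prod_dual_conj_mul m_gt0 minCpolyE psiE).
Qed.
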